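(* Let $X$ be a periodic commutative semigroup with a unique idempotent $e$. If the maximal subgroup $H_e$ of $X$ is bounded and for every infinite set $A\subseteq X$ the set $AA=\{xy:x,y\in A\}$ is not a singleton, then $X$ is $\mathsf{T_{1}S}$-closed.
   Context: $\mathsf{T_{1}S}$ is the class of topological semigroups satisfying the $T_1$ separation axiom. A semigroup $X$ is $\mathsf{T_{1}S}$-closed if for every isomorphic topological embedding of $X$ (with discrete topology) into some $Y\in\mathsf{T_{1}S}$ the image is closed in $Y$. Periodic: every element has an idempotent power. $H_e$ is the maximal subgroup containing $e$; a group is bounded if some exponent $n\ge1$ satisfies $x^n=e$ for all $x$. *)

From HB Require Import structures.
From mathcomp Require Import all_boot all_order all_algebra.
From mathcomp Require Import all_classical all_reals topology.
Set Implicit Arguments. Unset Strict Implicit. Unset Printing Implicit Defensive.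
Local Open Scope classical_set_scope.

(* powS mul x n = x^(n+1) *)
Fixpoint powS (X : Type) (mul : X -> X -> X) (x : X) (n : nat) : X :=
  match n with 0 => x | k.+1 => mul (powS mul x k) x end.

Definition idempotent_el (X : Type) (mul : X -> X -> X) (e : X) : Prop :=
  mul e e = e.

Definition periodic (X : Type) (mul : X -> X -> X) : Prop :=
  forall x, exists n, idempotent_el mul (powS mul x n).

Definition is_subgroup_with_id (X : Type) (mul : X -> X -> X) (e : X)
    (G : set X) : Prop :=
  [/\ G e,
      (forall x y, G x -> G y -> G (mul x y)),
      (forall x, G x -> mul e x = x /\ mul x e = x) &
      (forall x, G x -> exists y, [/\ G y, mul x y = e & mul y x = e])].

Definition H_e (X : Type) (mul : X -> X -> X) (e : X) : set X :=
  [set x | exists G : set X, is_subgroup_with_id mul e G /\ G x].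

Definition bounded_group (X : Type) (mul : X -> X -> X) (e : X)
    (G : set X) : Prop :=
  exists n, forall x, G x -> powS mul x n = e.

Definition prodset (X : Type) (mul : X -> X -> X) (A : set X) : set X :=
  [set z | exists x y, [/\ A x, A y & z = mul x y]].

(* Topological semigroup Y (with operation m) satisfying T1;
   X (discrete) embeds isomorphically and topologically via f. *)
Definition T1S_closed (X : Type) (mul : X -> X -> X) : Prop :=
  forall (Y : topologicalType) (m : Y -> Y -> Y),
    associative m ->
    continuous (fun p : Y * Y => m p.1 p.2) ->
    @accessible_space Y ->
    forall f : X -> Y,
      injective f ->
      (forall x y, f (mul x y) = m (f x) (f y)) ->
      (* f is a homeomorphism of the discrete space X onto its image *)
      (forall x, exists U : set Y, open U /\ U `&` range f = [set f x]) ->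
      closed (range f).

From HB Require Import structures.
From mathcomp Require Import all_boot all_order all_algebra.
From mathcomp Require Import all_classical all_reals topology.
From mathcomp Require Import zify.

Set Implicit Arguments.
Unset Strict Implicit.
Unset Printing Implicit Defensive.
Local Open Scope classical_set_scope.

(* Throughout, powS x n stands for x^(n+1).  The proof has two halves.
   1. Algebra: X has a global exponent q, i.e. x^(q+1) = e for all x.
      Let K = {a | a e = e}.  Every a in K is nilpotent onto e; if the
      nilpotency indices on K were unbounded, a Ramsey argument on the
      "half powers" w = a^(index/2), which satisfy w w = e, produces an
      infinite null set of high powers, a contradiction.  Since
      {y | e y = y} is a group inside H_e, boundedness of H_e puts a
      fixed power of every x into K, which gives the global exponent.
   2. Topology: if X sits discretely in a T1 topological semigroup Y and
      t lies in the closure of X, then t^(q+1) = e by continuity and T1,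
      so some power of t lies in X.
      Using the absence of infinite null sets, one shows that t^n in X
      forces t^(n+1) in X, and that t^2 in X forces t in X; descending
      on exponents by halving yields t in X, so X is closed in Y. *)

Section Powers.
Variables (T : Type) (op : T -> T -> T).
Hypothesis opA : associative op.

Lemma powS_add x a b : powS op x (a + b).+1 = op (powS op x a) (powS op x b).
Proof.
elim: b => [|b IH]; first by rewrite addn0.
rewrite addnS; transitivity (op (powS op x (a + b).+1) x) => //.
by rewrite IH -opA.
Qed.

Lemma powS_powS x a b : powS op (powS op x a) b = powS op x (a * b + a + b).
Proof.
elim: b => [|b IH]; first by rewrite muln0 addn0.
by rewrite /= IH -powS_add; congr (powS op x _); lia.
Qed.

Lemma powS_idem x n : op x x = x -> powS op x n = x.
Proof. by move=> xx; elim: n => //= n ->. Qed.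

Hypothesis opC : commutative op.

Lemma powS_op x y n : powS op (op x y) n = op (powS op x n) (powS op y n).
Proof.
elim: n => //= n ->; rewrite -!opA; congr (op _ _).
by rewrite [op (powS op y n) _]opC -!opA; congr (op _ _); apply: opC.
Qed.

End Powers.

Lemma powS_morph (T U : Type) (op : T -> T -> T) (op' : U -> U -> U) (f : T -> U) :
  (forall x y, f (op x y) = op' (f x) (f y)) ->
  forall x n, f (powS op x n) = powS op' (f x) n.
Proof. by move=> fM x; elim=> //= n <-; rewrite fM. Qed.

Lemma half_bounds n : (n <= (n./2 + n./2).+1)%N /\ (n./2 + n./2 <= n)%N.
Proof. have := odd_double_half n; have := leq_b1 (odd n); rewrite -addnn; lia. Qed.

Lemma infinite_fibre (I T : Type) (A : set I) (g : I -> T) :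
  infinite_set A -> finite_set (g @` A) ->
  exists v, infinite_set (A `&` g @^-1` [set v]).
Proof.
move=> Ainf gAfin; apply: contrapT => no_fibre; apply: Ainf.
have -> : A = \bigcup_(v in g @` A) (A `&` g @^-1` [set v]).
  apply/seteqP; split=> [i Ai|i [v _ []]] //.
  by exists (g i) => //; exists i.
apply: bigcup_finite => // v _.
by apply: contrapT => vinf; apply: no_fibre; exists v.
Qed.

Lemma infinite_unbounded (A : set nat) b :
  infinite_set A -> exists n, A n /\ (b <= n)%N.
Proof.
move=> Ainf; apply: contrapT => bounded; apply: Ainf.
apply: (@sub_finite_set _ _ `I_b); last exact: finite_II.
move=> n An /=; rewrite ltnNge; apply/negP => bn; apply: bounded; by exists n.
Qed.

Lemma infinite_of_injections (T : Type) (A : set T) :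
  (forall M, exists g : nat -> T, {in `I_M &, injective g} /\ g @` `I_M `<=` A) ->
  infinite_set A.
Proof.
move=> inj Afin; have [M AM] := (finite_set_leP A).1 Afin.
have [g [ginj gA]] := inj M.+1.
have IA : (`I_M.+1 #<= A)%card.
  by rewrite -(card_le_eql (inj_card_eq ginj)); apply: subset_card_le.
by have := card_le_trans IA AM; rewrite card_le_II ltnn.
Qed.

Section Ramsey.
Variables (T : Type) (F : nat -> nat -> T).
Hypothesis rows_finite : forall k, finite_set (range (F k)).

Lemma ramsey_step (A : set nat) : infinite_set A ->
  exists k v (A' : set nat),
    [/\ A k, infinite_set A' & A' `<=` [set l | [/\ A l, (k < l)%N & F k l = v]]].
Proof.
move=> Ainf; have [k Ak] := infinite_setN0 Ainf.
have Binf : infinite_set (A `\` `I_k.+1).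
  by apply: infinite_setD => //; exact: finite_II.
have [|v vinf] := infinite_fibre (g := F k) Binf.
  by apply: sub_finite_set (rows_finite k) => y [l _ <-]; exists l.
exists k, v, ((A `\` `I_k.+1) `&` F k @^-1` [set v]); split => //.
by move=> l [[Al /= kl] Fkl]; split=> //; rewrite ltnNge; apply/negP.
Qed.

Lemma ramsey_diagonal : exists (s : nat -> nat) (c : nat -> T),
  {homo s : n n' / (n < n')%N} /\
  forall n n', (n < n')%N -> F (s n) (s n') = c n.
Proof.
pose S := {A : set nat | infinite_set A}.
have step (A : S) : {p : nat * T * S | sval A p.1.1 /\
    sval p.2 `<=` [set l | [/\ sval A l, (p.1.1 < l)%N & F p.1.1 l = p.1.2]]}.
  apply: cid; have [k [v [A' [Ak A'inf A'sub]]]] := ramsey_step (svalP A).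
  by exists (k, v, exist _ A' A'inf).
pose st := fix st n : S :=
  if n is n'.+1 then (sval (step (st n'))).2 else exist _ setT infinite_nat.
pose s n := (sval (step (st n))).1.1.
have s_in n : sval (st n) (s n) by case: (svalP (step (st n))).
have st_sub n : sval (st n.+1) `<=`
    [set l | [/\ sval (st n) l, (s n < l)%N & F (s n) l = (sval (step (st n))).1.2]].
  by case: (svalP (step (st n))).
have st_dec n d : sval (st (n + d)) `<=` sval (st n).
  elim: d => [|d IH]; first by rewrite addn0.
  by rewrite addnS => l /st_sub [/IH].
have s_succ n : (s n < s n.+1)%N by have [] := st_sub n _ (s_in n.+1).
exists s, (fun n => (sval (step (st n))).1.2); split.
  exact: homo_ltn ltn_trans s_succ.
move=> n n' nn'; have -> : n' = n.+1 + (n' - n.+1) by lia.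
by have [] := st_sub n _ (st_dec n.+1 (n' - n.+1) _ (s_in _)).
Qed.

End Ramsey.

Lemma null_finite (X : Type) (mul : X -> X -> X) :
  (forall A : set X, infinite_set A -> ~ (exists z, prodset mul A = [set z])) ->
  forall (A : set X) z, (forall a b, A a -> A b -> mul a b = z) -> finite_set A.
Proof.
move=> no_null A z Aconst; apply: contrapT => Ainf; apply: (no_null _ Ainf).
have [a0 Aa0] := infinite_setN0 Ainf; exists z.
apply/seteqP; split=> [y [a [b [Aa Ab ->]]]|y ->] /=; first exact: Aconst.
by exists a0, a0; split=> //; rewrite Aconst.
Qed.

Section GlobalExponent.
Variables (X : Type) (mul : X -> X -> X) (e : X).
Hypotheses (mulA : associative mul) (mulC : commutative mul).
Hypotheses (per : periodic mul) (e_idem : idempotent_el mul e).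
Hypothesis e_unique : forall f, idempotent_el mul f -> f = e.
Hypothesis no_null :
  forall A : set X, infinite_set A -> ~ (exists z, prodset mul A = [set z]).

Local Notation P := (powS mul).
Local Notation K := [set a | mul a e = e].

Lemma mulCA a b c : mul a (mul b c) = mul b (mul a c).
Proof. by rewrite !mulA (mulC a). Qed.

Lemma mulACA a b c d : mul (mul a b) (mul c d) = mul (mul a c) (mul b d).
Proof. by rewrite -!mulA (mulCA b). Qed.

Lemma e_mulK a : K a -> mul e a = e.
Proof. by rewrite mulC. Qed.

Lemma K_mul a b : K a -> K b -> K (mul a b).
Proof. by move=> aK bK; rewrite /= -mulA bK. Qed.

Lemma K_pow a n : K a -> K (P a n).
Proof. by move=> aK; elim: n => //= n IH; exact: K_mul. Qed.

Lemma least_index a : exists n, P a n = e /\ forall j, (j < n)%N -> P a j <> e.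
Proof.
have has_index : exists n, `[< P a n = e >].
  by have [n /e_unique an] := per a; exists n; apply/asboolP.
case: (ex_minnP has_index) => n /asboolP an nmin.
by exists n; split=> // j jn /asboolP /nmin; rewrite leqNgt jn.
Qed.

Lemma K_absorb a n N : K a -> P a n = e -> (n <= N)%N -> P a N = e.
Proof.
move=> aK an nN; have [->|Nn] := eqVneq N n; first done.
have -> : N = (n + (N - n).-1).+1 by lia.
by rewrite powS_add // an e_mulK //; exact: K_pow.
Qed.

Lemma pow_injective a n : K a -> P a n = e -> (forall j, (j < n)%N -> P a j <> e) ->
  {in `I_n &, injective (P a)}.
Proof.
move=> aK an nmin.
suff lt_neq i j : (i < j < n)%N -> P a i <> P a j.
  move=> i j /set_mem /= i_n /set_mem /= j_n aij.
  case: (ltngtP i j) => [ij|ji|//]; exfalso.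
  - by apply: (lt_neq i j _ aij); rewrite ij.
  - by apply: (lt_neq j i _ (esym aij)); rewrite ji.
move=> /andP [ij jn] aij.
have periodic_from t : P a (i + t * (j - i)) = P a i.
  elim: t => [|t IH]; first by rewrite mul0n addn0.
  have -> : i + t.+1 * (j - i) = ((i + t * (j - i)) + (j - i).-1).+1 by lia.
  rewrite powS_add // IH -powS_add //.
  by have -> : (i + (j - i).-1).+1 = j by lia.
apply: (nmin i (ltn_trans ij jn)); rewrite -(periodic_from n).
by apply: (K_absorb aK an); nia.
Qed.

(* A "square-zero" element z (z z = e) of K multiplies K into a null set,
   which is therefore finite. *)
Lemma square_zero_orbit_finite z :
  K z -> mul z z = e -> finite_set [set mul z y | y in K].
Proof.
move=> zK zz; apply: (null_finite no_null (z := e)) => _ _ [y yK <-] [y' y'K <-].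
by rewrite mulACA zz e_mulK //; exact: K_mul.
Qed.

Lemma half_power_square a n : K a -> P a n = e -> mul (P a n./2) (P a n./2) = e.
Proof.
by move=> aK an; rewrite -powS_add //; apply: (K_absorb aK an); case: (half_bounds n).
Qed.

Lemma square_zero_clique (w : nat -> X) :
  (forall k, K (w k)) -> (forall k, mul (w k) (w k) = e) ->
  exists (I : set nat) (c : X), [/\ infinite_set I, K c, mul c c = e &
    forall i j, I i -> I j -> i <> j -> mul (w i) (w j) = c].
Proof.
move=> wK ww.
have rows_fin k : finite_set (range (fun l => mul (w k) (w l))).
  apply: sub_finite_set (square_zero_orbit_finite (wK k) (ww k)).
  by move=> _ [l _ <-]; exists (w l).
have [s [c [s_inc s_col]]] := ramsey_diagonal rows_fin.
have cE n : c n = mul (w (s n)) (w (s n.+1)) by rewrite s_col.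
have c_fin : finite_set (range c).
  apply: (null_finite no_null (z := e)) => _ _ [n _ <-] [n' _ <-].
  pose t := (maxn n n').+1.
  rewrite -(s_col n t) ?ltnS ?leq_maxl // -(s_col n' t) ?ltnS ?leq_maxr //.
  by rewrite mulACA ww; apply: K_mul.
have [c0 c0_inf] := infinite_fibre (g := c) infinite_nat c_fin.
have [n0 [_ /= cn0]] := infinite_setN0 c0_inf.
have s_inj : injective s.
  by move=> i j; case: (ltngtP i j) => [/s_inc|/s_inc|//] + sij; rewrite sij ltnn.
exists (s @` (setT `&` c @^-1` [set c0])), c0; split.
- by rewrite (eq_finite_set (inj_card_eq (in2W s_inj))).
- by rewrite -cn0 cE; apply: K_mul.
- by rewrite -cn0 cE mulACA !ww e_idem.
move=> _ _ [n [_ /= cn] <-] [n' [_ /= cn'] <-] sn_sn'.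
case: (ltngtP n n') => [nn'|n'n|nn']; last by rewrite nn' in sn_sn'.
- by rewrite -cn -(s_col _ _ nn').
- by rewrite mulC -cn' -(s_col _ _ n'n).
Qed.

Lemma uniform_tail (I : set nat) (c : X) (x : nat -> X) :
  infinite_set I -> K c -> mul c c = e -> (forall i, K (x i)) ->
  exists J : set nat, [/\ J `<=` I, infinite_set J &
    forall i j r, J i -> J j -> mul c (P (x i) r) = mul c (P (x j) r)].
Proof.
move=> Iinf cK cc xK.
have [|d d_inf] := infinite_fibre (g := fun i => mul c (x i)) Iinf.
  apply: sub_finite_set (square_zero_orbit_finite cK cc).
  by move=> _ [i _ <-]; exists (x i).
exists (I `&` (fun i => mul c (x i)) @^-1` [set d]).
split => [i [] //|//|i j r [_ /= ci] [_ /= cj]].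
elim: r => [|r IH] /=; first by rewrite ci cj.
by rewrite !mulA IH -!mulA !(mulCA c) ci cj.
Qed.

Section UnboundedIndices.
(* A sequence in K with unbounded indices, after the two refinements above,
   yields arbitrarily large finite subsets of one null set: a contradiction. *)
Variables (x : nat -> X) (m : nat -> nat) (J : set nat) (c : X).
Hypotheses (xK : forall i, K (x i)) (x_index : forall i, P (x i) (m i) = e).
Hypothesis x_min : forall i j, (j < m i)%N -> P (x i) j <> e.
Hypothesis J_unbounded : forall b, exists i, J i /\ (b <= m i)%N.
Hypothesis cK : K c.
Hypothesis J_clique : forall i j, J i -> J j -> i <> j ->
  mul (P (x i) (m i)./2) (P (x j) (m j)./2) = c.
Hypothesis J_tail : forall i j r, J i -> J j -> mul c (P (x i) r) = mul c (P (x j) r).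

Definition high_powers R : set X :=
  [set z | exists i a, [/\ J i, ((m i)./2 + R < a)%N & z = P (x i) a]].

Lemma c_kills_tail n0 i t : J n0 -> J i -> (m n0 <= t)%N -> mul c (P (x i) t) = e.
Proof.
move=> Jn0 Ji n0t.
by rewrite (J_tail _ Ji Jn0) (K_absorb (xK n0) (x_index n0) n0t).
Qed.

(* High powers form a null set: two powers of the same x i multiply beyond
   its index, while for i <> j the product factors through the clique value c
   times a tail killed by c. *)
Lemma high_powers_finite n0 : J n0 -> finite_set (high_powers (m n0)).
Proof.
move=> Jn0; apply: (null_finite no_null (z := e)).
move=> _ _ [i [a [Ji ia ->]]] [j [b [Jj jb ->]]].
case: (eqVneq i j) jb => [<- ib|ij jb].
  rewrite -powS_add //; apply: (K_absorb (xK i) (x_index i)).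
  by case: (half_bounds (m i)); lia.
have -> : a = ((m i)./2 + (a - (m i)./2).-1).+1 by lia.
have -> : b = ((m j)./2 + (b - (m j)./2).-1).+1 by lia.
rewrite !powS_add // mulACA (J_clique Ji Jj (elimN eqP ij)) mulA.
by rewrite (c_kills_tail Jn0 Ji) ?e_mulK //; [apply: K_pow | lia].
Qed.

(* An x i of large index contributes many distinct high powers. *)
Lemma high_powers_infinite R : infinite_set (high_powers R).
Proof.
apply: infinite_of_injections => M.
have [i [Ji big]] := J_unbounded (2 * (R + M + 2)).
pose base := ((m i)./2 + R).+1.
have base_lt k : (k < M)%N -> (base + k < m i)%N.
  by rewrite /base; case: (half_bounds (m i)); lia.
exists (fun k => P (x i) (base + k)); split.
  move=> k k' /set_mem /= kM /set_mem /= k'M eq_pow.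
  apply/eqP; rewrite -(eqn_add2l base); apply/eqP.
  by apply: (pow_injective (xK i) (x_index i) (@x_min i)) => //; apply/mem_set;
    apply: base_lt.
by move=> _ [k _ <-]; exists i, (base + k); split => //; rewrite /base; lia.
Qed.

Lemma unbounded_indices_absurd : False.
Proof.
have [n0 [Jn0 _]] := J_unbounded 0.
exact: high_powers_infinite (high_powers_finite Jn0).
Qed.

End UnboundedIndices.

Lemma K_bounded_index : exists N, forall a, K a -> P a N = e.
Proof.
apply: contrapT => unbounded.
have big_index k : exists p : X * nat, [/\ K p.1, P p.1 p.2 = e,
    (forall j, (j < p.2)%N -> P p.1 j <> e) & (k < p.2)%N].
  have [a [aK ak]] : exists a, K a /\ P a k <> e.
    apply: contrapT => small; apply: unbounded; exists k => a aK.
    by apply: contrapT => ak; apply: small; exists a.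
  have [n [an nmin]] := least_index a.
  exists (a, n); split => //=; rewrite ltnNge; apply/negP => nk.
  exact: ak (K_absorb aK an nk).
have [xm xmP] := choice big_index.
pose x k := (xm k).1; pose m k := (xm k).2.
have xK k : K (x k) by case: (xmP k).
have x_index k : P (x k) (m k) = e by case: (xmP k).
have x_min k : forall j, (j < m k)%N -> P (x k) j <> e by case: (xmP k).
have m_big k : (k < m k)%N by case: (xmP k).
have [I [c [Iinf cK cc I_clique]]] := @square_zero_clique (fun k => P (x k) (m k)./2)
  (fun k => K_pow _ (xK k)) (fun k => half_power_square (xK k) (x_index k)).
have [J [JI Jinf J_tail]] := uniform_tail Iinf cK cc xK.
apply: (@unbounded_indices_absurd x m J c xK x_index x_min _ cK _ J_tail).
- move=> b; have [i [Ji bi]] := infinite_unbounded b Jinf.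
  by exists i; split => //; apply/ltnW/(leq_ltn_trans bi).
- by move=> i j Ji Jj; apply: I_clique; apply: JI.
Qed.

Lemma e_fixed_subgroup : is_subgroup_with_id mul e [set y | mul e y = y].
Proof.
split => /=.
- exact: e_idem.
- by move=> a b ea eb; rewrite mulA ea.
- by move=> a ea; rewrite ea mulC ea.
move=> y ey; have [k /e_unique yk] := per y.
case: k yk => [|k] /= yk; first by exists e; rewrite yk; split => //; exact: e_idem.
have yyk : mul y (P y k) = e by rewrite mulC yk.
exists (mul e (P y k)); split => /=.
- by rewrite mulA e_idem.
- by rewrite mulCA yyk e_idem.
- by rewrite mulC mulCA yyk e_idem.
Qed.

Lemma global_exponent : bounded_group mul e (H_e mul e) -> exists q, forall x, P x q = e.
Proof.
case=> n Hn; have [N KN] := K_bounded_index.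
exists (n * N + n + N) => x; rewrite -powS_powS //; apply: KN => /=.
have exH : H_e mul e (mul e x) by exists [set y | mul e y = y]; split;
  [exact: e_fixed_subgroup | rewrite /= mulA e_idem].
by have := Hn _ exH; rewrite powS_op // powS_idem // mulC.
Qed.

End GlobalExponent.

Section Closure.
Variables (X : Type) (mul : X -> X -> X).
Hypotheses (mulA : associative mul) (mulC : commutative mul).
Hypothesis no_null :
  forall A : set X, infinite_set A -> ~ (exists z, prodset mul A = [set z]).
Variables (Y : topologicalType) (m : Y -> Y -> Y).
Hypothesis mA : associative m.
Hypothesis m_cont : continuous (fun p : Y * Y => m p.1 p.2).
Hypothesis T1 : @accessible_space Y.
Variable f : X -> Y.
Hypotheses (f_inj : injective f) (fM : forall x y, f (mul x y) = m (f x) (f y)).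
Hypothesis f_discrete : forall x, exists U : set Y, open U /\ U `&` range f = [set f x].

Local Notation cl := (closure (range f)).

Lemma f_pow x k : f (powS mul x k) = powS m (f x) k.
Proof. exact: powS_morph fM x k. Qed.

Lemma mul_nbhs u v (W : set Y) : nbhs (m u v) W ->
  exists V1 V2, [/\ nbhs u V1, nbhs v V2 & forall a b, V1 a -> V2 b -> W (m a b)].
Proof.
move=> Wuv; have [[V1 V2] /= [uV1 vV2] V12W] := @m_cont (u, v) _ Wuv.
by exists V1, V2; split => // a b aV1 bV2; apply: (V12W (a, b)).
Qed.

Lemma pow_nbhs k u (W : set Y) : nbhs (powS m u k) W ->
  exists V, nbhs u V /\ forall a, V a -> W (powS m a k).
Proof.
elim: k W => [|k IH] W /= W_uk; first by exists W.
have [V1 [V2 [V1_uk V2_u V12W]]] := mul_nbhs W_uk.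
have [V [uV VV1]] := IH _ V1_uk.
exists (V `&` V2); split => [|a [aV aV2]]; first exact: filterI.
by apply: V12W => //; exact: VV1.
Qed.

Lemma T1_nbhs y z : y <> z -> exists A : set Y, nbhs y A /\ ~ A z.
Proof.
move=> yz; have [A [oA yA zA]] := T1 (introN eqP yz); exists A; split.
  by apply: open_nbhs_nbhs; split => //; exact: set_mem.
by move=> Az; apply: (set_mem zA).
Qed.

Lemma in_all_nbhs_eq (t p : Y) : (forall B, nbhs t B -> B p) -> t = p.
Proof.
by move=> tp; apply: contrapT => /T1_nbhs [A [tA Ap]]; exact: Ap (tp _ tA).
Qed.

Lemma cl_pow t k : cl t -> cl (powS m t k).
Proof.
move=> clt B tkB; have [V [tV VB]] := pow_nbhs tkB.
have [_ [[x _ <-] xV]] := clt _ tV.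
by exists (powS m (f x) k); split; [exists (powS mul x k); rewrite ?f_pow | exact: VB].
Qed.

Lemma cl_pow_const t k c : cl t -> (forall x, powS m (f x) k = c) -> powS m t k = c.
Proof.
move=> clt xc; apply: contrapT => /T1_nbhs [A [tkA Ac]].
have [V [tV VA]] := pow_nbhs tkA.
have [_ [[x _ <-] xV]] := clt _ tV.
by apply: Ac; rewrite -(xc x); apply: VA.
Qed.

Lemma isolated c : exists U, nbhs (f c) U /\ forall x, U (f x) -> x = c.
Proof.
have [U [oU Uc]] := f_discrete c; exists U; split.
  apply: open_nbhs_nbhs; split => //.
  by have [] : (U `&` range f) (f c) by rewrite Uc.
move=> x Ux; apply: f_inj.
have : (U `&` range f) (f x) by split => //; exists x.
by rewrite Uc.
Qed.

(* Near t all products of points of X equal c, so they form a finite null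
   set, which is closed and hence avoidable if t were outside X. *)
Lemma cl_sqrt t c : cl t -> m t t = f c -> range f t.
Proof.
move=> clt ttc; apply: contrapT => tX.
have [U [cU Uc]] := isolated c.
rewrite -ttc in cU; have [V1 [V2 [tV1 tV2 V12U]]] := mul_nbhs cU.
pose A := f @^-1` (V1 `&` V2).
have A_fin : finite_set A.
  apply: (null_finite no_null (z := c)) => a b [aV1 _] [_ bV2].
  by apply: Uc; rewrite fM; apply: V12U.
have fA_closed : closed (f @` A).
  exact: (accessible_finite_set_closed.1 T1) _ (finite_image _ A_fin).
have t_nbhs : nbhs t ((V1 `&` V2) `&` ~` (f @` A)).
  apply: filterI; first exact: filterI.
  apply: open_nbhs_nbhs; split; first by rewrite openC.
  by move=> [a _ at_]; apply: tX; exists a.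
have [_ [[x _ <-] [xV fxA]]] := clt _ t_nbhs.
by apply: fxA; exists x.
Qed.

(* Shifting: if t^(k+2) lies in X then so does t^(k+3).  Near t, the products
   a^(k+1) b of points of X all equal c, which pins a^(k+3) to c a0. *)
Lemma cl_shift t k c : cl t -> powS m t k.+1 = f c -> range f (powS m t k.+2).
Proof.
move=> clt tkc.
have [U [cU Uc]] := isolated c.
rewrite -tkc /= in cU; have [V1 [V2 [tV1 tV2 V12U]]] := mul_nbhs cU.
have [V [tV VV1]] := pow_nbhs tV1.
pose A := f @^-1` (V `&` V2).
have Aprod a b : A a -> A b -> mul (powS mul a k) b = c.
  move=> [aV _] [_ bV2]; apply: Uc.
  by rewrite fM f_pow; apply: V12U => //; apply: VV1.
have [_ [[a0 _ <-] a0A]] := clt _ (filterI tV tV2).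
exists (mul c a0) => //; apply: esym; apply: in_all_nbhs_eq => B tB.
have [V' [tV' V'B]] := pow_nbhs tB.
have [_ [[a _ <-] [aA aV']]] := clt _ (filterI (filterI tV tV2) tV').
have ak : powS mul a k.+2 = mul c a0.
  rewrite /= (Aprod a a aA aA) -[in LHS](Aprod a a0 aA a0A).
  by rewrite -mulA (mulC a0 a) mulA (Aprod a a aA aA).
by rewrite -ak f_pow; apply: V'B.
Qed.

(* If some power t^(k+1) of a point of the closure lies in X, so does t:
   by halving, t^(j+1) with j + 1 = ceil((k+1)/2) lies in X. *)
Lemma cl_root t k c : cl t -> powS m t k = f c -> range f t.
Proof.
elim/ltn_ind: k c t => -[|k] IH c t clt tkc; first by exists c.
pose j := (k.+1)./2.
have even_in_X : range f (powS m t (j + j).+1).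
  have := half_bounds k.+1; rewrite -/j => -[hk1 hk2].
  have [->|->] : (j + j).+1 = k.+1 \/ (j + j).+1 = k.+2 by lia.
    by exists c.
  exact: cl_shift clt tkc.
have [c' _ c'E] := even_in_X.
have square_in_X : m (powS m t j) (powS m t j) = f c' by rewrite c'E powS_add.
have [c'' _ c''E] := cl_sqrt (cl_pow (k := j) clt) square_in_X.
by apply: (IH j _ c'' t clt (esym c''E)); rewrite /j; case: (half_bounds k.+1); lia.
Qed.

Lemma range_closed q e : (forall x, powS mul x q = e) -> closed (range f).
Proof.
move=> xq t clt; apply: (cl_root (k := q) (c := e) clt).
by apply: cl_pow_const => // x; rewrite -f_pow xq.
Qed.

End Closure.

Theorem lemma4p3 (X : Type) (mul : X -> X -> X) (e : X) :
  associative mul -> commutative mul ->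
  periodic mul ->
  idempotent_el mul e ->
  (forall f, idempotent_el mul f -> f = e) ->
  bounded_group mul e (H_e mul e) ->
  (forall A : set X, infinite_set A -> ~ (exists z, prodset mul A = [set z])) ->
  T1S_closed mul.
Proof.
move=> mulA mulC per e_idem e_unique H_bounded no_null.
have [q xq] := global_exponent mulA mulC per e_idem e_unique no_null H_bounded.
move=> Y m mA m_cont T1 f f_inj fM f_discrete.
exact: (range_closed mulA mulC no_null mA m_cont T1 f_inj fM f_discrete xq).
Qed.
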